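(* Let $W\subset S$ be a finite-dimensional $\mathbb{F}_q$-subspace and $\lambda,\mu$ partitions. If $T_{\lambda/\mu}(W)\neq0$, then $0\le\lambda_i-\mu_i\le\dim W$ for all $i$; in particular $\mu\subseteq\lambda$.
   Context: Let $q$ be a power of a prime $p$, $S=\mathbb{F}_q[x_1,\dots,x_n]$, $\widehat S=\bigcup_{r\ge0}\mathbb{F}_q[x_1^{q^{-r}},\dots,x_n^{q^{-r}}]$, $\varphi(u)=u^q$ the Frobenius automorphism of $\widehat S$. For a subspace $W\subset S$ of dimension $k$ with basis $w_1,\dots,w_k$ and strictly decreasing nonnegative integers $\alpha_1>\dots>\alpha_k$, $A_\alpha(W)=\det(w_i^{q^{\alpha_j}})_{i,j}$; for a partition $\lambda$ with at most $k$ nonzero parts, $S_\lambda(W)=A_{\lambda+\delta_k}(W)/A_{\delta_k}(W)$, $\delta_k=(k-1,\dots,0)$. $E_r(W)=S_{(1^r)}(W)$ for $0\le r\le k$, $E_r(W)=0$ otherwise. For partitions $\lambda,\mu$ with $N=\max\{\ell(\lambda),\ell(\mu)\}$ ($\ell$ = number of nonzero parts), $T_{\lambda/\mu}(W)=\det\big((-1)^{\lambda_i-\mu_j-i+j}\varphi^{\lambda_i-i}E_{\lambda_i-\mu_j-i+j}(W)\big)_{1\le i,j\le N}$. Parts $\lambda_i$ with $i>\ell(\lambda)$ are $0$. $\mu\subseteq\lambda$ means $\mu_i\le\lambda_i$ for all $i$. *)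

From HB Require Import structures.
From mathcomp Require Import all_boot all_order all_algebra all_field.
From mathcomp Require Import mpoly.
Set Implicit Arguments. Unset Strict Implicit. Unset Printing Implicit Defensive.
Import Order.TTheory GRing.Theory Num.Theory.
Local Open Scope ring_scope.

Definition lin_indep (F : finFieldType) (n k : nat) (w : 'I_k -> {mpoly F[n]}) :=
  forall c : 'I_k -> F, \sum_(i < k) c i *: w i = 0 -> forall i, c i = 0.

Section Moore.
Variables (K : fieldType) (q k : nat) (w : 'I_k -> K).

Definition Amoore (alpha : 'I_k -> nat) : K :=
  \det (\matrix_(i < k, j < k) (w i) ^+ (q ^ (alpha j))).

(* delta_k = (k-1, ..., 0), 0-based index j |-> k-1-j *)
Definition delta_k (j : 'I_k) : nat := (k - 1 - j)%N.

Definition Schur (lam : 'I_k -> nat) : K :=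
  Amoore (fun j => lam j + delta_k j)%N / Amoore delta_k.

(* E_r(W) = S_{(1^r)}(W) for 0 <= r <= k, and 0 otherwise (r : int) *)
Definition Eelem (r : int) : K :=
  match r with
  | Posz r' => if (r' <= k)%N then Schur (fun j => (j < r')%N : nat) else 0
  | Negz _ => 0
  end.
End Moore.

(* phi^m for m : int, where phi(u) = u^q and root is its inverse (q-th root) *)
Definition frob_pow (K : fieldType) (q : nat) (root : K -> K) (m : int) (x : K) : K :=
  match m with
  | Posz a => x ^+ (q ^ a)
  | Negz a => iter a.+1 root x
  end.

(* A partition: a weakly decreasing finite sequence of positive integers;
   its length ell(lambda) is the size of the sequence, and lambda_i (1-based)
   is nth 0 lambda (i-1), which is 0 for i > ell(lambda). *)
Definition is_partition (lam : seq nat) : bool :=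
  sorted geq lam && (0%N \notin lam).

(* T_{lambda/mu}(W), entries indexed 0-based: with i = i0+1, j = j0+1,
   entry = (-1)^{lambda_i - mu_j - i + j} phi^{lambda_i - i} E_{lambda_i - mu_j - i + j}(W). *)
Definition Tskew (K : fieldType) (q : nat) (root : K -> K) (k : nat)
    (w : 'I_k -> K) (lam mu : seq nat) : K :=
  let N := maxn (size lam) (size mu) in
  \det (\matrix_(i < N, j < N)
     let e : int := ((nth 0%N lam i)%:Z - (nth 0%N mu j)%:Z - (i.+1)%:Z + (j.+1)%:Z)%R in
     (-1) ^+ `|e|%N *
     frob_pow q root ((nth 0%N lam i)%:Z - (i.+1)%:Z)%R (Eelem q w e)).

(* Every entry of T_{lambda/mu}(W) is a Frobenius twist of some E_e(W), and E_e(W) = 0 unless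
   0 <= e <= dim W.  Since lambda and mu are weakly decreasing, mu_i > lambda_i makes
   e = lambda_a - mu_b - a + b negative for all rows a >= i and columns b <= i, while
   lambda_i > mu_i + dim W makes it exceed dim W for all rows a <= i and columns b >= i.
   Either way the N x N matrix, N = max(l(lambda), l(mu)), has an (N - i) x (i + 1) zero block
   in a corner, which kills its determinant. *)
From HB Require Import structures.
From mathcomp Require Import all_boot all_order all_algebra all_field.
From mathcomp Require Import mpoly zify perm.
Set Implicit Arguments. Unset Strict Implicit. Unset Printing Implicit Defensive.
Import GRing.Theory.
Local Open Scope ring_scope.

Lemma card_ord_geq (N j : nat) : #|[set a : 'I_N | (j <= a)%N]| = (N - j)%N.
Proof.
rewrite -sum1_card (eq_bigl (fun a : 'I_N => xpredT a && (j <= a)%N)) => [|a]; last first.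
  by rewrite inE.
by rewrite -(big_geq_mkord j N xpredT (fun _ => 1%N)) sum_nat_const_nat muln1.
Qed.

Lemma det_lower_left_zero_block (R : comNzRingType) (N i : nat) (M : 'M[R]_N) :
  (i < N)%N -> (forall a b : 'I_N, (i <= a)%N -> (b <= i)%N -> M a b = 0) ->
  \det M = 0.
Proof.
move=> lt_iN M0; apply: big1 => s _.
(* Pigeonhole: s cannot map the N - i rows a >= i into the N - i - 1 columns > i. *)
suff /existsP [a /andP [ia sai]] : [exists a : 'I_N, (i <= a)%N && (s a <= i)%N].
  by rewrite (bigD1 a) //= M0 // mul0r mulr0.
apply: contraT => /existsPn s_up.
have sub : s @: [set a : 'I_N | (i <= a)%N] \subset [set b : 'I_N | (i.+1 <= b)%N].
  apply/subsetP => b /imsetP [a]; rewrite !inE => ia ->.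
  by move: (s_up a); rewrite ia /= -ltnNge.
by have := subset_leq_card sub; rewrite card_imset ?card_ord_geq; [lia | exact: perm_inj].
Qed.

Lemma Eelem_lt0 (K : fieldType) q k (w : 'I_k -> K) (e : int) :
  e < 0 -> Eelem q w e = 0.
Proof. by case: e. Qed.

Lemma Eelem_gt (K : fieldType) q k (w : 'I_k -> K) (e : int) :
  k%:Z < e -> Eelem q w e = 0.
Proof. by case: e => //= r; rewrite ltz_nat => /ltn_geF ->. Qed.

Lemma frob_pow0 (K : fieldType) q (root : K -> K) (m : int) :
  (0 < q)%N -> root 0 = 0 -> frob_pow q root m 0 = 0.
Proof.
move=> q_gt0 root0; case: m => a /=; first by rewrite expr0n expn_eq0 eqn0Ngt q_gt0.
by elim: a => //= a ->.
Qed.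

Lemma sorted_geq_nth (s : seq nat) (a b : nat) :
  sorted geq s -> (a <= b)%N -> (nth 0%N s b <= nth 0%N s a)%N.
Proof.
move=> s_sorted le_ab; case: (ltnP b (size s)) => [lt_bs|]; last by move/(nth_default 0%N)->.
apply: (sorted_leq_nth (fun _ _ _ h1 h2 => leq_trans h2 h1) leqnn 0%N s_sorted) => //.
by rewrite inE (leq_ltn_trans le_ab).
Qed.

Section TskewVanishing.
Variables (K : fieldType) (q : nat) (root : K -> K) (k : nat) (w : 'I_k -> K).
Hypotheses (q_gt0 : (0 < q)%N) (root0 : root 0 = 0).
Variables (lam mu : seq nat).
Hypotheses (lam_sorted : sorted geq lam) (mu_sorted : sorted geq mu).

Lemma Tskew_eq0_of_lt (i : nat) : (i < maxn (size lam) (size mu))%N ->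
  (nth 0%N lam i < nth 0%N mu i)%N -> Tskew q root w lam mu = 0.
Proof.
move=> lt_iN lt_lam_mu; rewrite /Tskew /=.
apply: (det_lower_left_zero_block lt_iN) => a b ia bi.
rewrite mxE Eelem_lt0 ?frob_pow0 ?mulr0 //.
have := sorted_geq_nth lam_sorted ia; have := sorted_geq_nth mu_sorted bi; lia.
Qed.

Lemma Tskew_eq0_of_gt (i : nat) : (i < maxn (size lam) (size mu))%N ->
  (nth 0%N mu i + k < nth 0%N lam i)%N -> Tskew q root w lam mu = 0.
Proof.
move=> lt_iN lt_mu_lam; rewrite /Tskew /= -det_tr.
apply: (det_lower_left_zero_block lt_iN) => a b ia bi.
rewrite !mxE Eelem_gt ?frob_pow0 ?mulr0 //.
have := sorted_geq_nth lam_sorted bi; have := sorted_geq_nth mu_sorted ia; lia.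
Qed.

End TskewVanishing.

Theorem mainTheorem2 (F : finFieldType) (n : nat)
    (K : fieldType) (iota : {rmorphism {mpoly F[n]} -> K})
    (iota_inj : injective iota)
    (root : K -> K) (root_spec : forall x : K, root x ^+ #|F| = x)
    (k : nat) (w : 'I_k -> {mpoly F[n]}) (w_indep : lin_indep w)
    (lam mu : seq nat) (Hlam : is_partition lam) (Hmu : is_partition mu) :
  Tskew #|F| root (fun i => iota (w i)) lam mu != 0 ->
  forall i : nat, (nth 0%N mu i <= nth 0%N lam i <= nth 0%N mu i + k)%N.
Proof.
move=> T_neq0 i.
have q_gt0 : (0 < #|F|)%N by apply/card_gt0P; exists 0.
have root0 : root 0 = 0.
  by apply/eqP; move: (expf_eq0 (root 0) #|F|); rewrite q_gt0 root_spec eqxx.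
case/andP: Hlam => lam_sorted _; case/andP: Hmu => mu_sorted _.
case: (ltnP i (maxn (size lam) (size mu))) => [lt_iN | ]; last first.
  by rewrite geq_max => /andP [? ?]; rewrite !nth_default.
apply/andP; split; rewrite leqNgt; apply: contra_neqN T_neq0 => lt_i.
  exact: (Tskew_eq0_of_lt _ q_gt0 root0 lam_sorted mu_sorted lt_iN).
exact: (Tskew_eq0_of_gt _ q_gt0 root0 lam_sorted mu_sorted lt_iN).
Qed.
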